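(* For $0\le i\le n$ and integers $d,p$: if $(d+1,p)\in DP_i$ and $(d,p)\ge(0,\pi_0)$, then $(d,p)\in DP_i$.
   Context: Let $x_0\le x_1\le\cdots\le x_{n+1}$ be real numbers, $\{x\}=x-\lfloor x\rfloor$, and let $\pi=(\pi_0,\dots,\pi_{n+1})$ be the permutation of $\{0,\dots,n+1\}$ such that for $0\le i<j\le n+1$, $\pi_i>\pi_j$ iff $(\{x_i\},-x_i,i)<(\{x_j\},-x_j,j)$ lexicographically. For a sequence of indices $s_0<\cdots<s_k$, a drop is a consecutive pair $(s_{h-1},s_h)$ with $\pi_{s_{h-1}}>\pi_{s_h}$. For $0\le h\le i\le n$, $dp(h,i)$ is the pair $(d(h,i),p(h,i))$, where $d(h,i)$ is the minimum number of drops over all sequences of $h+1$ indices $0=s_0<s_1<\cdots<s_h\le i$, and $p(h,i)$ is the minimum of $\pi_{s_h}$ over all such sequences having exactly $d(h,i)$ drops. Let $DP_i=\{dp(h,i)\mid 0\le h\le i\}$. Pairs are compared lexicographically. *)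

From HB Require Import structures.
From mathcomp Require Import all_boot all_order all_algebra.
From mathcomp Require Import reals.
Set Implicit Arguments. Unset Strict Implicit. Unset Printing Implicit Defensive.
Import Order.TTheory GRing.Theory Num.Theory.
Local Open Scope ring_scope.

Definition frac (R : realType) (x : R) : R := x - (Num.floor x)%:~R.

Definition key_lt (R : realType) (x : nat -> R) (k l : nat) : bool :=
  (frac (x k) < frac (x l)) ||
  ((frac (x k) == frac (x l)) &&
   ((- x k < - x l) || ((- x k == - x l) && (k < l)%N))).

Definition valid_seq (s : nat -> nat) (h i : nat) : Prop :=
  s 0%N = 0%N /\ (forall k, (k < h)%N -> (s k < s k.+1)%N) /\ (s h <= i)%N.

Definition drops (pi : nat -> nat) (s : nat -> nat) (h : nat) : nat :=
  (\sum_(1 <= k < h.+1) (pi (s k) < pi (s k.-1))%N)%N.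

Definition is_d (pi : nat -> nat) (h i D : nat) : Prop :=
  (exists s, valid_seq s h i /\ drops pi s h = D) /\
  (forall s, valid_seq s h i -> (D <= drops pi s h)%N).

Definition is_dp (pi : nat -> nat) (h i D P : nat) : Prop :=
  is_d pi h i D /\
  (exists s, [/\ valid_seq s h i, drops pi s h = D & pi (s h) = P]) /\
  (forall s, valid_seq s h i -> drops pi s h = D -> (P <= pi (s h))%N).

Definition inDP (pi : nat -> nat) (i : nat) (d p : int) : Prop :=
  exists h D P, [/\ (h <= i)%N, is_dp pi h i D P, d = D%:Z & p = P%:Z].

From HB Require Import structures.
From mathcomp Require Import all_boot all_order all_algebra.
From mathcomp Require Import reals.
From mathcomp Require Import zify.
Import Order.TTheory GRing.Theory Num.Theory.

Set Implicit Arguments.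
Unset Strict Implicit.
Unset Printing Implicit Defensive.

(* Encode a pair (d, p) as d * N + p with N larger than every value of pi, so that
   the lexicographic order becomes the order of nat.  Then dp(h, i+1) is the
   minimum of dp(h, i) and of the least number >= dp(h-1, i) congruent to pi_(i+1)
   modulo N, the score of an optimal sequence for dp(h-1, i) extended by i+1.
   The lemma says that the strictly increasing list h |-> dp(h, i) is closed under
   subtracting N, down to dp(0, i).  The recursion preserves this: in each gap
   (dp(h-1, i), dp(h, i)] it keeps the first member of the residue class of
   pi_(i+1), if any, else dp(h, i); closedness of the old list lets one move such
   gaps down by N. *)

(* For r < N: the least y >= x with y = r modulo N. *)
Definition next_mod (N r x : nat) : nat := (x %/ N + (r < x %% N)) * N + r.

Section NextMod.

Variables N r : nat.
Hypothesis r_lt : r < N.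

Lemma next_mod_code D q : q < N -> next_mod N r (D * N + q) = (D + (r < q)) * N + r.
Proof.
move=> q_lt; rewrite /next_mod divnMDl ?(leq_trans _ q_lt) // modnMDl.
by rewrite divn_small // modn_small // addn0.
Qed.

Lemma modn_next_mod x : next_mod N r x %% N = r.
Proof. by rewrite /next_mod modnMDl modn_small. Qed.

Lemma next_mod_ge x : x <= next_mod N r x.
Proof.
rewrite {1}(divn_eq x N) /next_mod.
by case: ltnP => /= [|le_q_r]; [rewrite mulnDl mul1n -addnA leq_add2l; lia | lia].
Qed.

Lemma next_mod_gt x : x %% N != r -> x < next_mod N r x.
Proof.
move=> xN_neq; rewrite ltn_neqAle next_mod_ge andbT.
by apply: contra_neq xN_neq => ->; rewrite modn_next_mod.
Qed.

Lemma next_mod_lt x : next_mod N r x < x + N.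
Proof.
have := ltn_pmod x (leq_ltn_trans (leq0n r) r_lt).
rewrite {2}(divn_eq x N) /next_mod; case: ltnP => /= _ _; nia.
Qed.

Lemma next_mod_min x z : x <= z -> z %% N = r -> next_mod N r x <= z.
Proof.
have N_gt0 : 0 < N by lia.
move=> + zN; rewrite (divn_eq z N) zN; move: (z %/ N) => E.
move: (x %/ N) (x %% N) (divn_eq x N) (ltn_pmod x N_gt0) => D q -> lt_q le_xz.
rewrite next_mod_code //; have [lt_rq|le_qr] /= := ltnP r q.
- have : D < E by rewrite -(ltn_pmul2r N_gt0); lia.
  nia.
- have : D < E.+1 by rewrite -(ltn_pmul2r N_gt0) mulSn; lia.
  nia.
Qed.

Lemma next_mod_eq x u : x <= u -> u < x + N -> u %% N = r -> next_mod N r x = u.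
Proof.
move=> le_xu lt_u uN; apply/eqP; rewrite eqn_leq next_mod_min //= leqNgt.
apply/negP => lt_next_u.
have : N %| u - next_mod N r x.
  rewrite -eqn_mod_dvd; last exact: ltnW.
  by rewrite modn_next_mod uN.
move/dvdn_leq; rewrite subn_gt0 => /(_ lt_next_u).
move: (next_mod_ge x) lt_next_u; move: (next_mod N r x) => y; lia.
Qed.

Lemma next_mod_mono x y : x <= y -> next_mod N r x <= next_mod N r y.
Proof.
move=> le_xy; apply: next_mod_min (modn_next_mod y).
exact: leq_trans le_xy (next_mod_ge y).
Qed.

End NextMod.

Definition least_of {T : Type} (P : T -> Prop) (f : T -> nat) (v : nat) : Prop :=
  (exists2 s, P s & f s = v) /\ (forall s, P s -> v <= f s).

Lemma least_of_unique T (P : T -> Prop) f v w :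
  least_of P f v -> least_of P f w -> v = w.
Proof.
move=> [[s Ps <-] v_min] [[t Pt <-] w_min].
by apply/eqP; rewrite eqn_leq v_min // w_min.
Qed.

Lemma least_of_or T (P Q : T -> Prop) f v w :
  least_of P f v -> least_of Q f w -> least_of (fun s => P s \/ Q s) f (minn v w).
Proof.
move=> [[s Ps fs] v_min] [[t Qt ft] w_min]; split.
  by have [_ | _] := leqP v w; [exists s; first left | exists t; first right].
by move=> u [/v_min | /w_min]; rewrite geq_min => ->; rewrite ?orbT.
Qed.

Lemma least_of_equiv T (P Q : T -> Prop) f v :
  (forall s, P s <-> Q s) -> least_of P f v -> least_of Q f v.
Proof.
move=> PQ [[s Ps fs] v_min]; split; first by exists s; rewrite -?PQ.
by move=> t /PQ /v_min.
Qed.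

Lemma valid_seq0 s i : valid_seq s 0 i <-> s 0 = 0.
Proof. by split=> [[]|s0]; last by rewrite /valid_seq s0. Qed.

Lemma valid_seq_ge s h i : valid_seq s h i -> h <= s h.
Proof.
move=> [s0 [s_incr _]]; suff : forall k, k <= h -> k <= s k by apply.
elim=> [|k IHk] lt_kh //; have := s_incr k lt_kh; have := IHk (ltnW lt_kh); lia.
Qed.

Lemma valid_seq_leq s h i : valid_seq s h i -> h <= i.
Proof. by move=> v_s; have := valid_seq_ge v_s; case: v_s => _ [_]; lia. Qed.

Lemma valid_seq_last_leq s h i n : i <= n -> valid_seq s h i -> s h <= n.
Proof. by move=> le_in [_ [_ le_shi]]; apply: leq_trans le_shi le_in. Qed.

Lemma valid_seq_prefix s h i : valid_seq s h.+1 i -> valid_seq s h i.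
Proof.
move=> [s0 [s_incr shi]]; split=> //; split=> [k lt_kh|]; first by apply: s_incr; lia.
by have := s_incr h (ltnSn h); lia.
Qed.

Lemma valid_seq_succE s h i :
  valid_seq s h.+1 i.+1 <-> valid_seq s h.+1 i \/ valid_seq s h i /\ s h.+1 = i.+1.
Proof.
split=> [[s0 [s_incr shi]] | [[s0 [s_incr shi]] | [[s0 [s_incr shi]] s_last]]].
- have [le_si | gt_si] := leqP (s h.+1) i; first by left.
  right; split; last by lia.
  split=> //; split=> [k lt_kh|]; first by apply: s_incr; lia.
  by have := s_incr h (ltnSn h); lia.
- by split=> //; split=> //; lia.
- split=> //; split=> [k|]; last by lia.
  by rewrite ltnS leq_eqVlt => /predU1P [->|/s_incr //]; lia.
Qed.

Lemma valid_seq_eq s t h i :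
  (forall k, k <= h -> s k = t k) -> valid_seq t h i -> valid_seq s h i.
Proof.
move=> st [t0 [t_incr thi]]; split; first by rewrite st.
by split=> [k lt_kh|]; rewrite !st //; [apply: t_incr | apply: ltnW].
Qed.

Lemma drops0 pi s : drops pi s 0 = 0.
Proof. by rewrite /drops big_geq. Qed.

Lemma dropsS pi s h : drops pi s h.+1 = drops pi s h + (pi (s h.+1) < pi (s h)).
Proof. by rewrite /drops big_nat_recr. Qed.

Lemma drops_eq pi s t h : (forall k, k <= h -> s k = t k) -> drops pi s h = drops pi t h.
Proof.
move=> st; apply: eq_big_nat => k /andP [k_gt0 lt_kh].
by rewrite !st //; lia.
Qed.

Lemma exists_crossing (f : nat -> nat) u a :
  f 0 < u -> u <= f a -> exists2 j, j < a & f j < u <= f j.+1.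
Proof.
move=> lt_f0 le_fa; elim: a le_fa => [|a IHa] le_fa; first by lia.
have [lt_fa | le_fa'] := ltnP (f a) u; first by exists a; rewrite ?lt_fa.
by have [j lt_ja fj] := IHa le_fa'; exists j => //; apply: ltnW.
Qed.

Definition dp_step (N r m : nat) (G : nat -> nat) (h : nat) : nat :=
  if h == 0 then G 0
  else if h <= m then minn (G h) (next_mod N r (G h.-1))
  else next_mod N r (G h.-1).

Definition down_closed (N m : nat) (G : nat -> nat) : Prop :=
  forall h, h <= m -> G 0 + N <= G h -> exists2 j, j <= m & G j + N = G h.

Section DownClosedStep.

Variables (N r m : nat) (G : nat -> nat).
Hypothesis r_lt : r < N.
Hypothesis G_incr : forall a b, a < b <= m -> G a < G b.
Hypothesis G_mod : forall a, a <= m -> G a %% N != r.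
Hypothesis G_closed : down_closed N m G.

Let G' := dp_step N r m G.

Let G_leq a b : a <= b <= m -> G a <= G b.
Proof.
case/andP; rewrite leq_eqVlt => /predU1P [-> //|lt_ab le_bm].
by rewrite ltnW ?G_incr ?lt_ab.
Qed.

Lemma down_shift_below a z :
  a <= m -> G 0 < z -> G a < z + N -> exists2 b, b <= m & G b < z /\ G a <= G b + N.
Proof.
move=> le_am lt_G0z lt_Gaz.
have [/(G_closed le_am) [b le_bm Gb] | lt_Ga] := leqP (G 0 + N) (G a).
  by exists b => //; lia.
by exists 0 => //; lia.
Qed.

(* u := next_mod N r (G a) - N is the first member of its class in its gap (G j, G j.+1]. *)
Lemma down_closed_step_next a :
  a <= m -> G 0 + N <= next_mod N r (G a) ->
  exists2 j, j <= m.+1 & G' j + N = next_mod N r (G a).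
Proof.
move=> le_am; set w := next_mod N r (G a) => le_w.
have [u def_w] : exists u, w = u + N by exists (w - N); lia.
have u_mod : u %% N = r by rewrite -(modn_next_mod r_lt (G a)) -/w def_w modnDr.
have lt_G0u : G 0 < u.
  rewrite ltn_neqAle (_ : G 0 <= u) ?andbT; last by lia.
  by apply: contraNneq (G_mod (leq0n m)) => ->; rewrite u_mod.
have lt_uGa : u < G a by have := next_mod_lt r_lt (G a); rewrite -/w def_w; lia.
have [j lt_ja /andP [lt_Gju le_uGj1]] := exists_crossing (f := G) lt_G0u (ltnW lt_uGa).
have [|b le_bm [lt_Gbu le_Ga_GbN]] := down_shift_below le_am lt_G0u.
  by rewrite -def_w next_mod_gt ?G_mod.
have le_bj : b <= j.
  rewrite leqNgt; apply/negP => lt_jb.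
  by have := @G_leq j.+1 b; rewrite lt_jb le_bm => /(_ isT); lia.
have next_Gj : next_mod N r (G j) = u.
  apply: next_mod_eq => //; first exact: ltnW.
  by have := @G_leq b j; rewrite le_bj (leq_trans (ltnW lt_ja) le_am) => /(_ isT); lia.
exists j.+1; first by lia.
rewrite /G' /dp_step /= (leq_trans lt_ja le_am) next_Gj.
by rewrite (minn_idPr le_uGj1).
Qed.

(* A class member in (G j, G j.+1), moved up by N, would lie in (G k.-1, G k). *)
Lemma down_closed_step_keep k :
  0 < k <= m -> G k < next_mod N r (G k.-1) -> G 0 + N <= G k ->
  exists2 j, j <= m.+1 & G' j + N = G k.
Proof.
case/andP=> k_gt0 le_km lt_Gk_next le_Gk.
have [j le_jm Gj] := G_closed le_km le_Gk.
exists j; first by lia.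
rewrite /G' /dp_step le_jm; case: j le_jm Gj => [|j] //= le_jm Gj.
rewrite (minn_idPl _) // leqNgt; apply/negP => lt_next.
have le_k1m : k.-1 <= m by lia.
have lt_G0 : G 0 < G j.+1 by rewrite G_incr ?le_jm.
have lt_Gk1 : G k.-1 < G j.+1 + N by rewrite Gj G_incr //; lia.
have [b le_bm [lt_Gb le_Gk1]] := down_shift_below le_k1m lt_G0 lt_Gk1.
have le_bj : b <= j.
  rewrite leqNgt; apply/negP => lt_jb.
  by have := @G_leq j.+1 b; rewrite lt_jb le_bm => /(_ isT); lia.
have le_Gb_next : G b <= next_mod N r (G j).
  apply: leq_trans (next_mod_ge r_lt (G j)); apply: G_leq; rewrite le_bj; lia.
have := next_mod_min r_lt (x := G k.-1) (z := next_mod N r (G j) + N).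
rewrite modnDr modn_next_mod // => /(_ _ erefl); lia.
Qed.

Lemma down_closed_step : down_closed N m.+1 G'.
Proof.
rewrite /down_closed (_ : G' 0 = G 0) //.
case=> [|k] le_km1; first by rewrite /G' /dp_step /= => ?; exfalso; lia.
have -> : G' k.+1 = if k < m then minn (G k.+1) (next_mod N r (G k))
                    else next_mod N r (G k) by [].
case: ltnP => [lt_km | le_mk] le_G'k.
- have [le_next | lt_next] := leqP (next_mod N r (G k)) (G k.+1).
  + by rewrite (minn_idPr le_next) in le_G'k *; apply: down_closed_step_next => //; lia.
  + rewrite (minn_idPl (ltnW lt_next)) in le_G'k *.
    by apply: down_closed_step_keep.
- by apply: down_closed_step_next.
Qed.

End DownClosedStep.

Fixpoint dpval (N : nat) (pi : nat -> nat) (i : nat) : nat -> nat :=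
  if i is i'.+1 then dp_step N (pi i) i' (dpval N pi i') else fun=> pi 0.

Lemma dpval0 N pi i : dpval N pi i 0 = pi 0.
Proof. by elim: i. Qed.

Section DropsValue.

Variables (pi : nat -> nat) (N n : nat).
Hypothesis pi_lt : forall k, k <= n -> pi k < N.
Hypothesis pi_inj : forall k l, k <= n -> l <= n -> pi k = pi l -> k = l.

Definition score (s : nat -> nat) (h : nat) : nat := drops pi s h * N + pi (s h).

Definition least_score (h i v : nat) : Prop :=
  least_of (fun s => valid_seq s h i) (fun s => score s h) v.

Lemma score_mod s h : s h <= n -> score s h %% N = pi (s h).
Proof. by move=> le_shn; rewrite /score modnMDl modn_small ?pi_lt. Qed.

Lemma score_div s h : s h <= n -> score s h %/ N = drops pi s h.
Proof.
move=> le_shn; have lt_piN := pi_lt le_shn.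
by rewrite /score divnMDl ?(leq_ltn_trans (leq0n _) lt_piN) // divn_small // addn0.
Qed.

Lemma scoreS s h : s h <= n -> s h.+1 <= n ->
  score s h.+1 = next_mod N (pi (s h.+1)) (score s h).
Proof. by move=> le_shn le_sh1n; rewrite /score next_mod_code ?pi_lt // dropsS. Qed.

Lemma score_ltS s h i : i <= n -> valid_seq s h.+1 i -> score s h < score s h.+1.
Proof.
move=> le_in v_s; have [_ [s_incr le_sh1i]] := v_s.
have lt_sh := s_incr h (ltnSn h).
rewrite scoreS ?next_mod_gt ?score_mod ?pi_lt //; try lia.
by apply/eqP => /pi_inj; lia.
Qed.

Lemma least_score0 i : least_score 0 i (pi 0).
Proof.
split; first by exists (fun=> 0); rewrite ?valid_seq0 // /score drops0.
by move=> s /valid_seq0 s0; rewrite /score drops0 s0.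
Qed.

Lemma least_score_last h i v : i < n -> least_score h i v ->
  least_of (fun s => valid_seq s h i /\ s h.+1 = i.+1) (fun s => score s h.+1)
           (next_mod N (pi i.+1) v).
Proof.
move=> lt_in [[t v_t score_t] v_min]; have r_lt := pi_lt lt_in.
have le_shn s : valid_seq s h i -> s h <= n := valid_seq_last_leq (ltnW lt_in).
split.
  pose t' k := if k <= h then t k else i.+1.
  have t't k : k <= h -> t' k = t k by rewrite /t' => ->.
  have t'_last : t' h.+1 = i.+1 by rewrite /t' ltnn.
  have v_t' : valid_seq t' h i := valid_seq_eq t't v_t.
  exists t' => //; rewrite (scoreS (le_shn _ v_t')) t'_last //.
  by rewrite /score (drops_eq _ t't) t't // -/(score t h) score_t.
move=> s [v_s s_last]; rewrite scoreS ?le_shn ?s_last //.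
exact: next_mod_mono (v_min s v_s).
Qed.

Lemma dpval_least i h : i <= n -> h <= i -> least_score h i (dpval N pi i h).
Proof.
elim: i h => [|i IHi] [|h] le_in le_hi; rewrite ?dpval0; try exact: least_score0; first by [].
have last := least_score_last le_in (IHi h (ltnW le_in) le_hi).
apply: least_of_equiv (fun s => iff_sym (valid_seq_succE s h i)) _.
rewrite /= /dp_step /=; case: ifP => [lt_hi | /negbT ge_hi].
  exact: least_of_or (IHi _ (ltnW le_in) lt_hi) last.
apply: least_of_equiv last => s; split=> [|[/valid_seq_leq|//]]; first by right.
by rewrite (negbTE ge_hi).
Qed.

Lemma dpval_incr i : i <= n -> forall a b, a < b <= i -> dpval N pi i a < dpval N pi i b.
Proof.
move=> le_in a b /andP [lt_ab le_bi].
have step h : h < i -> dpval N pi i h < dpval N pi i h.+1.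
  move=> lt_hi; have [[t v_t <-] _] := dpval_least le_in lt_hi.
  have [_ min_h] := dpval_least le_in (ltnW lt_hi).
  exact: leq_ltn_trans (min_h t (valid_seq_prefix v_t)) (score_ltS le_in v_t).
elim: b lt_ab le_bi => [|b IHb] //; rewrite ltnS leq_eqVlt => /predU1P [-> | lt_ab] lt_bi.
  exact: step.
exact: ltn_trans (IHb lt_ab (ltnW lt_bi)) (step b lt_bi).
Qed.

Lemma dpval_mod i h : i <= n -> h <= i -> exists2 e, e <= i & dpval N pi i h %% N = pi e.
Proof.
move=> le_in le_hi; have [[t v_t <-] _] := dpval_least le_in le_hi.
have [_ [_ le_thi]] := v_t.
by exists (t h) => //; rewrite score_mod //; lia.
Qed.

Lemma dpval_down_closed i : i <= n -> down_closed N i (dpval N pi i).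
Proof.
elim: i => [_ [|h] // _ /= le_N | i IHi lt_in].
  by have := pi_lt (leq0n n); lia.
apply: down_closed_step; first exact: pi_lt.
- exact: dpval_incr (ltnW lt_in).
- move=> a le_ai; have [e le_ei ->] := dpval_mod (ltnW lt_in) le_ai.
  by apply/eqP => /pi_inj; lia.
- exact: IHi (ltnW lt_in).
Qed.

Lemma is_dp_lt h i D P : i <= n -> is_dp pi h i D P -> P < N.
Proof.
by move=> le_in [_ [[s [v_s _ <-]] _]]; rewrite pi_lt // (valid_seq_last_leq le_in v_s).
Qed.

Lemma is_dp_least_score h i D P :
  i <= n -> is_dp pi h i D P -> least_score h i (D * N + P).
Proof.
move=> le_in dp_h; have lt_PN := is_dp_lt le_in dp_h.
move: dp_h => [[_ d_min] [[s [v_s ds ps]] p_min]].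
split; first by exists s; rewrite // /score ds ps.
move=> t v_t; rewrite /score.
have := d_min t v_t; rewrite leq_eqVlt => /predU1P [dt | lt_dt].
  by rewrite -dt leq_add2l p_min.
by nia.
Qed.

Lemma least_score_is_dp h i v :
  i <= n -> least_score h i v -> is_dp pi h i (v %/ N) (v %% N).
Proof.
move=> le_in [[t v_t <-] v_min].
rewrite score_div ?score_mod ?(valid_seq_last_leq le_in v_t) //.
split; [split|split]; try by exists t.
- move=> s v_s; have := v_min s v_s; have := pi_lt (valid_seq_last_leq le_in v_s).
  by rewrite /score; nia.
- by move=> s v_s ds; have := v_min s v_s; rewrite /score ds leq_add2l.
Qed.

End DropsValue.

Local Open Scope ring_scope.

Theorem lemma10 (R : realType) (n : nat) (x : nat -> R) (pi : nat -> nat)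
  (hx : forall k, (k <= n)%N -> x k <= x k.+1)
  (hpi_range : forall k, (k <= n.+1)%N -> (pi k <= n.+1)%N)
  (hpi_inj : forall k l, (k <= n.+1)%N -> (l <= n.+1)%N -> pi k = pi l -> k = l)
  (hpi : forall k l, (k < l)%N -> (l <= n.+1)%N -> (pi l < pi k)%N = key_lt x k l)
  (i : nat) (hi : (i <= n)%N) (d p : int) :
  inDP pi i (d + 1) p ->
  ((0 < d) || ((d == 0) && ((pi 0%N)%:Z <= p))) ->
  inDP pi i d p.
Proof.
move=> [h [D [P [le_hi dp_h dD ->]]]] cond.
have pi_lt k : (k <= n.+1)%N -> (pi k < n.+2)%N by move/hpi_range.
have le_in : (i <= n.+1)%N by apply: leqW.
case: d dD cond => [d|//] /eqP; rewrite -PoszD eqz_nat => /eqP dD cond.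
have lt_PN := is_dp_lt pi_lt le_in dp_h.
have dpv := least_of_unique (is_dp_least_score pi_lt le_in dp_h)
                            (dpval_least pi_lt le_in le_hi).
have le_N : (dpval n.+2 pi i 0 + n.+2 <= dpval n.+2 pi i h)%N.
  rewrite dpval0 -dpv -dD; have := pi_lt 0%N isT; case/orP: cond => [|/andP [/eqP]]; nia.
have [h' le_h'i dpv'] := dpval_down_closed pi_lt hpi_inj le_in le_hi le_N.
exists h', d, P; split=> //.
have := least_score_is_dp pi_lt le_in (dpval_least pi_lt le_in le_h'i).
have -> : dpval n.+2 pi i h' = (d * n.+2 + P)%N by move: dpv'; rewrite -dpv -dD; nia.
by rewrite divnMDl // modnMDl divn_small // modn_small // addn0.
Qed.
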